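(* Let $M$ be a $T_0$-algebra. An element $x\in M$ is an atom if and only if for every $u\in\mathcal O M$ we have: $x\le u$ iff $x\not\le\neg u$.
   Context: An MT-algebra is a pair $(M,\square)$ where $M$ is a complete boolean algebra and $\square:M\to M$ satisfies $\square 1=1$, $\square(a\wedge b)=\square a\wedge\square b$, $\square a\le a$, $\square a\le\square\square a$; $\Diamond a=\neg\square\neg a$; $\mathcal O M=\{a:\square a=a\}$ (open elements), $\mathcal C M=\{a:\Diamond a=a\}$ (closed elements). An element is saturated if it is a meet of a subset of $\mathcal O M$, and weakly locally closed if it is of the form $s\wedge c$ with $s$ saturated and $c$ closed. $M$ is a $T_0$-algebra if every element of $M$ is a join of weakly locally closed elements. *)

(* boolean algebras = ctbDistrLatticeType (complemented
   distributive lattices with top and bottom); completeness is a hypothesis. *)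
From HB Require Import structures.
From mathcomp Require Import all_boot all_order.
Set Implicit Arguments. Unset Strict Implicit. Unset Printing Implicit Defensive.
Import Order.Theory.
Local Open Scope order_scope.

Section MTDefs.
Context {d : Order.disp_t} {T : ctbDistrLatticeType d}.

Definition is_join (S : T -> Prop) (x : T) : Prop :=
  (forall y, S y -> y <= x) /\ (forall z, (forall y, S y -> y <= z) -> x <= z).

Definition is_meet (S : T -> Prop) (x : T) : Prop :=
  (forall y, S y -> x <= y) /\ (forall z, (forall y, S y -> z <= y) -> z <= x).

Definition complete_lattice : Prop := forall S : T -> Prop, exists x, is_join S x.

Definition MT_axioms (box : T -> T) : Prop :=
  [/\ box \top = \top,
      (forall a b, box (a `&` b) = box a `&` box b),
      (forall a, box a <= a)
    & (forall a, box a <= box (box a))].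

Definition diamond (box : T -> T) (a : T) : T := ~` box (~` a).

Definition is_open (box : T -> T) (a : T) : Prop := box a = a.
Definition is_closed (box : T -> T) (a : T) : Prop := diamond box a = a.

Definition saturated (box : T -> T) (s : T) : Prop :=
  exists S : T -> Prop, (forall y, S y -> is_open box y) /\ is_meet S s.

Definition weakly_locally_closed (box : T -> T) (x : T) : Prop :=
  exists s c, [/\ saturated box s, is_closed box c & x = s `&` c].

Definition T0_algebra (box : T -> T) : Prop :=
  forall x : T, exists S : T -> Prop,
    (forall y, S y -> weakly_locally_closed box y) /\ is_join S x.

Definition atom (x : T) : Prop :=
  x <> \bot /\ forall y, y <= x -> y = \bot \/ y = x.

End MTDefs.

(* An atom lies below exactly one of u and ~u for every u, open or not.
   Conversely, suppose x is non-zero and lies below exactly one of u, ~u for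
   every open u.  Then x also decides every closed c (via the open ~c) and
   every saturated s (if x is below no open u >= s, it is below the
   complement of one of them).  So a weakly locally closed w = s & c below x
   is either 0 or above x.  Writing any y <= x as a join of weakly locally
   closed elements, y is 0 or y = x. *)
From HB Require Import structures.
From mathcomp Require Import all_boot all_order.
From Stdlib Require Import Classical.
Import Order.Theory.
Local Open Scope order_scope.

Section BooleanAlgebra.
Context {d : Order.disp_t} {T : ctbDistrLatticeType d}.
Implicit Types (w x y u : T).

Lemma le_compl_eq0 {w u} : w <= u -> w <= ~` u -> w = \bot.
Proof. by move=> wu wCu; apply/eqP; rewrite -lex0 -(meetxC u) lexI wu wCu. Qed.

Lemma atom_leNcompl x u : atom x -> (x <= u <-> ~ x <= ~` u).
Proof.
move=> [x_neq0 x_atom]; split=> [xu xCu | xNCu].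
  exact: x_neq0 (le_compl_eq0 xu xCu).
have [xCu0 | xCux] := x_atom (x `&` ~` u) (leIl _ _).
  by move/eqP: xCu0; rewrite disj_leC complK.
by case: xNCu; rewrite -xCux leIr.
Qed.

Lemma join_eq0 (S : T -> Prop) y :
  is_join S y -> (forall w, S w -> w = \bot) -> y = \bot.
Proof.
by move=> [_ y_least] S0; apply/eqP; rewrite -lex0; apply: y_least => w /S0 ->.
Qed.

End BooleanAlgebra.

Section Decided.
Context {d : Order.disp_t} {T : ctbDistrLatticeType d} (box : T -> T).
Implicit Types (w x y s c u : T).

Definition decides_opens x := forall u, is_open box u -> x <= u \/ x <= ~` u.

Lemma decides_opensP {x} :
  (forall u, is_open box u -> (x <= u <-> ~ x <= ~` u)) -> decides_opens x.
Proof.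
move=> xP u /xP [_ Nu_le]; have [|xNCu] := boolP (x <= ~` u); first by right.
by left; apply: Nu_le; apply/negP.
Qed.

Lemma closed_open_compl c : is_closed box c -> is_open box (~` c).
Proof. by rewrite /is_closed /diamond /is_open => cE; rewrite -{2}cE complK. Qed.

Lemma decides_closed {x c} :
  decides_opens x -> is_closed box c -> x <= c \/ x <= ~` c.
Proof. by move=> xD /closed_open_compl /xD [|]; [right | rewrite complK; left]. Qed.

Lemma decides_saturated {x s} : decides_opens x -> saturated box s ->
  x <= s \/ exists2 u, s <= u & x <= ~` u.
Proof.
move=> xD [S [S_open [s_lb s_glb]]].
have [x_lb | /not_all_ex_not [u /(imply_to_and (S u)) [Su xNu]]] :=
  classic (forall u, S u -> x <= u); first by left; apply: s_glb.
right; exists u; first exact: s_lb.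
by have [/xNu [] |] := xD u (S_open u Su).
Qed.

Lemma wlc_below_decided {x w} : decides_opens x ->
  weakly_locally_closed box w -> w <= x -> w = \bot \/ x <= w.
Proof.
move=> xD [s [c [s_sat c_closed ->]]] wx.
have [xc | xCc] := decides_closed xD c_closed; last first.
  by left; apply: (le_compl_eq0 (leIr _ _)); apply: le_trans wx xCc.
have [xs | [u su xCu]] := decides_saturated xD s_sat.
  by right; rewrite lexI xs xc.
by left; apply: (le_compl_eq0 (le_trans (leIl _ _) su)); apply: le_trans wx xCu.
Qed.

Lemma atom_of_decides_opens {x} : T0_algebra box -> x <> \bot ->
  decides_opens x -> atom x.
Proof.
move=> hT0 x_neq0 xD; split=> // y yx.
have [S [S_wlc y_join]] := hT0 y; have [y_ub _] := y_join.
have [S0 | /not_all_ex_not [w /(imply_to_and (S w)) [Sw w_neq0]]] :=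
  classic (forall w, S w -> w = \bot); first by left; apply: join_eq0 S0.
have [//|xw] := wlc_below_decided xD (S_wlc w Sw) (le_trans (y_ub w Sw) yx).
by right; apply/eqP; rewrite eq_le yx (le_trans xw (y_ub w Sw)).
Qed.

End Decided.

Theorem lemma5p3 (d : Order.disp_t) (T : ctbDistrLatticeType d) (box : T -> T)
  (hcomplete : complete_lattice (T := T)) (hMT : MT_axioms box)
  (hT0 : T0_algebra box) (x : T) :
  atom x <-> (forall u : T, is_open box u -> ((x <= u) <-> ~ (x <= ~` u))).
Proof.
split=> [x_atom u _ | xP]; first exact: atom_leNcompl.
have [box1 _ _ _] := hMT.
apply: (atom_of_decides_opens box hT0 _ (decides_opensP box xP)).
move=> x0; have [x_le1 _] := xP \top box1.
by apply: x_le1; rewrite ?lex1 // x0 le0x.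
Qed.
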